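(* Let $A,B\in\mathrm{Sym}^{\rm qnd}(\mathbb C^{2d})$ be such that $\mathbb 1+A\theta B\theta$ is invertible (so $A\#B$ is well defined). Then \begin{align*} A\#B&=c\big(c(A\theta)c(B\theta)\big)\theta\\ &=(\mathbb 1+A\theta)^{-1}(A\theta+B\theta)(\mathbb 1+A\theta B\theta)^{-1}(\mathbb 1+A\theta)\theta\\ &=(\mathbb 1+B\theta)(\mathbb 1+A\theta B\theta)^{-1}(A\theta+B\theta)(\mathbb 1+B\theta)^{-1}\theta\\ &=(\mathbb 1-A\theta)(\mathbb 1+B\theta A\theta)^{-1}(A\theta+B\theta)(\mathbb 1-A\theta)^{-1}\theta\\ &=(\mathbb 1-B\theta)^{-1}(A\theta+B\theta)(\mathbb 1+B\theta A\theta)^{-1}(\mathbb 1-B\theta)\theta, \end{align*} (all inverses and Cayley transforms appearing here exist), $c\big((A\#B)\theta\big)=c(A\theta)c(B\theta)$, \[ \mathbb 1+A\theta B\theta=(\mathbb 1+A\theta)\big(\mathbb 1+(A\#B)\theta\big)^{-1}(\mathbb 1+B\theta), \] and $A\#B\in\mathrm{Sym}^{\rm qnd}(\mathbb C^{2d})$.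
   Context: Let $d\ge 1$, let $\mathbb 1$ denote an identity matrix, and let $\theta=\begin{bmatrix}0&-i\mathbb 1_d\\ i\mathbb 1_d&0\end{bmatrix}$ ($2d\times 2d$). $\mathrm{Sym}(\mathbb C^{n})$ denotes the set of complex symmetric $n\times n$ matrices, and $\mathrm{Sym}^{\rm qnd}(\mathbb C^{2d})=\{A\in\mathrm{Sym}(\mathbb C^{2d}):\det(\mathbb 1+A\theta)\neq0\}$. For a square matrix $R$ with $\mathbb 1+R$ invertible, its Cayley transform is $c(R)=(\mathbb 1-R)(\mathbb 1+R)^{-1}$. For $A,B\in\mathrm{Sym}(\mathbb C^{2d})$ such that $M=\begin{bmatrix}\theta A\theta&-\theta\\ \theta&\theta B\theta\end{bmatrix}$ is invertible, $A\#B:=J^TM^{-1}J$ with $J=\begin{bmatrix}-\mathbb 1_{2d}\\ \mathbb 1_{2d}\end{bmatrix}$; $A\#B$ is well defined iff $M$ is invertible, which holds iff $\mathbb 1+A\theta B\theta$ is invertible. *)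

(* Complex numbers: an arbitrary numClosedFieldType C
   (e.g. algC); the statement is purely algebraic. *)
From HB Require Import structures.
From mathcomp Require Import all_boot all_order all_algebra.
Set Implicit Arguments. Unset Strict Implicit. Unset Printing Implicit Defensive.
Import Order.TTheory GRing.Theory Num.Theory.
Local Open Scope ring_scope.

Section Defs.
Variables (C : numClosedFieldType) (d : nat).
Local Notation M2 := 'M[C]_(d + d).

Definition theta : M2 :=
  block_mx 0 (- 'i *: 1%:M) ('i *: 1%:M) 0.

Definition is_sym (A : M2) : Prop := A^T = A.

Definition is_symqnd (A : M2) : Prop :=
  is_sym A /\ \det (1%:M + A *m theta) != 0.

Definition cayley n (R : 'M[C]_n) : 'M[C]_n :=
  (1%:M - R) *m invmx (1%:M + R).

Definition sharpM (A B : M2) : 'M[C]_((d + d) + (d + d)) :=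
  block_mx (theta *m A *m theta) (- theta) theta (theta *m B *m theta).

Definition Jmx : 'M[C]_((d + d) + (d + d), d + d) := col_mx (- 1%:M) 1%:M.

Definition sharp (A B : M2) : M2 := (Jmx^T *m invmx (sharpM A B)) *m Jmx.
End Defs.

From HB Require Import structures.
From mathcomp Require Import all_boot all_order all_algebra.
Import Order.TTheory GRing.Theory Num.Theory.
Set Implicit Arguments. Unset Strict Implicit. Unset Printing Implicit Defensive.
Local Open Scope ring_scope.

(* Write X = Aθ and Y = Bθ.  The block matrix M defining A # B factors as
   diag(θ, θ) [[X, -1], [1, Y]], and the second factor has an explicit inverse
   in terms of (1 + XY)^-1; this gives (A # B)θ = (1 + Y)(1 + XY)^-1(1 + X) - 1.
   Everything else is a matrix identity in X and Y: conjugating by 1 + X and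
   1 + Y gives two of the closed forms, and the substitution (X, Y) -> (-Y, -X),
   which negates (A # B)θ, turns them into the two others.  Since
   1 + c(Z) = 2 (1 + Z)^-1, the Cayley transform of (A # B)θ is c(X) c(Y), and
   c is an involution.  Finally, as A, B are symmetric and θ^T = -θ, θ^2 = 1,
   the matrices 1 - X and 1 + YX are θ-conjugates of the transposes of 1 + X
   and 1 + XY, hence invertible. *)

Section MatrixInverse.
Variables (R : comUnitRingType) (n : nat).
Implicit Types P Q : 'M[R]_n.

Lemma invmx_uniq P Q : P *m Q = 1%:M -> invmx P = Q.
Proof.
move=> PQ; have [uP _] := mulmx1_unit PQ.
by rewrite -[invmx P]mulmx1 -PQ mulmxA mulVmx ?mul1mx.
Qed.

Lemma invmxM P Q : P \in unitmx -> Q \in unitmx ->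
  invmx (P *m Q) = invmx Q *m invmx P.
Proof. by move=> uP uQ; apply: invmx_uniq; rewrite -mulmxA mulKVmx ?mulmxV. Qed.

End MatrixInverse.

Section TwistedSharp.
Variables (R : comUnitRingType) (n : nat).
Implicit Types X Y : 'M[R]_n.

(* [tsharp (A *m theta) (B *m theta)] is [sharp A B *m theta], see [sharpE]. *)
Definition tsharp X Y :=
  (1%:M + Y) *m invmx (1%:M + X *m Y) *m (1%:M + X) - 1%:M.

Lemma add1_tsharp X Y :
  1%:M + tsharp X Y = (1%:M + Y) *m invmx (1%:M + X *m Y) *m (1%:M + X).
Proof. by rewrite addrC subrK. Qed.

Lemma mulmx_add1 X Y : (1%:M + X) *m (1%:M + Y) = 1%:M + X *m Y + (X + Y).
Proof. by rewrite mulmxDl !mulmxDr !mul1mx mulmx1 addrACA [Y + _]addrC addrACA. Qed.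

Lemma mulmx_sub1 X Y : (1%:M - X) *m (1%:M - Y) = 1%:M + X *m Y - (X + Y).
Proof. by rewrite mulmx_add1 mulmxN mulNmx opprK opprD. Qed.

Variables X Y : 'M[R]_n.
Hypothesis uXY : 1%:M + X *m Y \in unitmx.
Local Notation W := (invmx (1%:M + X *m Y)).

Lemma unitmx_add1_tsharp : 1%:M + X \in unitmx -> 1%:M + Y \in unitmx ->
  1%:M + tsharp X Y \in unitmx.
Proof. by move=> uX uY; rewrite add1_tsharp !unitmx_mul uX uY unitmx_inv uXY. Qed.

Lemma invmx_add1_tsharp : 1%:M + X \in unitmx -> 1%:M + Y \in unitmx ->
  invmx (1%:M + tsharp X Y) =
    invmx (1%:M + X) *m (1%:M + X *m Y) *m invmx (1%:M + Y).
Proof.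
move=> uX uY; have uW : W \in unitmx by rewrite unitmx_inv.
by rewrite add1_tsharp !invmxM ?unitmx_mul ?uY // invmxK mulmxA.
Qed.

Lemma add1_mulmx_tsharp : 1%:M + X \in unitmx -> 1%:M + Y \in unitmx ->
  1%:M + X *m Y = (1%:M + X) *m invmx (1%:M + tsharp X Y) *m (1%:M + Y).
Proof.
by move=> uX uY; rewrite invmx_add1_tsharp // !mulmxA (mulmxV uX) mul1mx mulmxKV.
Qed.

Lemma tsharp_conj_add1X : 1%:M + X \in unitmx ->
  tsharp X Y = invmx (1%:M + X) *m (X + Y) *m W *m (1%:M + X).
Proof.
move=> uX; rewrite -!mulmxA; apply: (canRL (mulKmx uX)).
rewrite mulmxBr mulmx1 !mulmxA mulmx_add1 (mulmxDl (1%:M + X *m Y)) (mulmxV uXY).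
by rewrite mulmxDl mul1mx addrAC subrr add0r -!mulmxA.
Qed.

Lemma tsharp_conj_add1Y : 1%:M + Y \in unitmx ->
  tsharp X Y = (1%:M + Y) *m W *m (X + Y) *m invmx (1%:M + Y).
Proof.
move=> uY; apply: (canRL (mulmxK uY)).
rewrite mulmxBl mul1mx -!mulmxA mulmx_add1 (mulmxDr W) (mulVmx uXY).
by rewrite mulmxDr mulmx1 addrAC subrr add0r.
Qed.

Local Notation Kinv :=
  (block_mx (Y *m W) (1%:M - Y *m W *m X) (- W) (W *m X)).

Lemma mulmx_block_inv : block_mx X (- 1%:M) 1%:M Y *m Kinv = 1%:M.
Proof.
have XYW : X *m Y *m W + W = 1%:M.
  by rewrite -[RHS](mulmxV uXY) mulmxDl mul1mx addrC.
rewrite mulmx_block (scalar_mx_block n n 1) !mul1mx mulmxN !mulNmx mul1mx.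
congr block_mx.
- by rewrite opprK mulmxA XYW.
- by rewrite mulmxBr mulmx1 -addrA -opprD !mulmxA -mulmxDl mul1mx XYW mul1mx subrr.
- by rewrite mulmxN subrr.
- by rewrite mulmxA subrK.
Qed.

Lemma invmx_block : invmx (block_mx X (- 1%:M) 1%:M Y) = Kinv.
Proof. exact: invmx_uniq mulmx_block_inv. Qed.

Lemma unitmx_block : block_mx X (- 1%:M) 1%:M Y \in unitmx.
Proof. by have [] := mulmx1_unit mulmx_block_inv. Qed.

Lemma tsharp_blockE :
  tsharp X Y = row_mx (- 1%:M) 1%:M *m Kinv *m col_mx (- 1%:M) 1%:M.
Proof.
apply: esym; rewrite mul_row_block mul_row_col !mulNmx !mul1mx mulmxN mulmx1 opprD !opprK.
rewrite /tsharp (mulmxDr _ 1%:M) !mulmxDl !mul1mx !mulmx1 opprB.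
by rewrite [Y *m W + W]addrC -addrA addrAC [_ + W *m X]addrC !addrA.
Qed.

Hypothesis uYX : 1%:M + Y *m X \in unitmx.
Local Notation V := (invmx (1%:M + Y *m X)).

Lemma push_invmx_add1l : W *m X = X *m V.
Proof.
have E : X *m (1%:M + Y *m X) = (1%:M + X *m Y) *m X.
  by rewrite mulmxDr mulmxDl mulmx1 mul1mx mulmxA.
by apply: (canRL (mulmxK uYX)); rewrite -mulmxA E mulKmx.
Qed.

Lemma push_invmx_add1r : Y *m W = V *m Y.
Proof.
have E : (1%:M + Y *m X) *m Y = Y *m (1%:M + X *m Y).
  by rewrite mulmxDr mulmxDl mulmx1 mul1mx mulmxA.
by apply: (canRL (mulKmx uYX)); rewrite mulmxA E -mulmxA (mulmxV uXY) mulmx1.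
Qed.

Lemma tsharp_oppC : tsharp (- Y) (- X) = - tsharp X Y.
Proof.
have sum2 : (1%:M + Y) *m W *m (1%:M + X) + (1%:M - X) *m V *m (1%:M - Y)
    = 1%:M + 1%:M.
  rewrite (mulmxDl 1%:M Y) mul1mx push_invmx_add1r mulmxDl -[V *m Y *m _]mulmxA.
  rewrite (mulmxBl 1%:M X) mul1mx -push_invmx_add1l mulmxBl -[W *m X *m _]mulmxA.
  rewrite [_ - W *m _]addrC addrACA -mulmxBr -mulmxDr (mulmxBr X) mulmx1.
  rewrite addrKA opprK (mulmxDr Y) mulmx1 [_ + (1%:M - Y)]addrC subrKA.
  by rewrite (mulVmx uXY) (mulVmx uYX).
rewrite /tsharp mulmxN mulNmx opprK opprB.
rewrite -[(1%:M - X) *m _ *m _](addKr ((1%:M + Y) *m W *m (1%:M + X))) sum2.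
by rewrite !addrA addrK addrC.
Qed.

End TwistedSharp.

Section TwistedSharpSub1.
Variables (R : comUnitRingType) (n : nat) (X Y : 'M[R]_n).
Hypotheses (uXY : 1%:M + X *m Y \in unitmx) (uYX : 1%:M + Y *m X \in unitmx).

Let uYX_opp : 1%:M + (- Y) *m (- X) \in unitmx.
Proof. by rewrite mulmxN mulNmx opprK. Qed.

Lemma tsharp_conj_sub1X : 1%:M - X \in unitmx ->
  tsharp X Y = (1%:M - X) *m invmx (1%:M + Y *m X) *m (X + Y) *m invmx (1%:M - X).
Proof.
move=> uX; apply: oppr_inj.
rewrite -(tsharp_oppC uXY uYX) (tsharp_conj_add1Y uYX_opp) //.
by rewrite mulmxN mulNmx opprK -opprD mulmxN !mulNmx [Y + X]addrC.
Qed.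

Lemma tsharp_conj_sub1Y : 1%:M - Y \in unitmx ->
  tsharp X Y = invmx (1%:M - Y) *m (X + Y) *m invmx (1%:M + Y *m X) *m (1%:M - Y).
Proof.
move=> uY; apply: oppr_inj.
rewrite -(tsharp_oppC uXY uYX) (tsharp_conj_add1X uYX_opp) //.
by rewrite mulmxN mulNmx opprK -opprD mulmxN !mulNmx [Y + X]addrC.
Qed.

End TwistedSharpSub1.

Section Cayley.
Variables (C : numClosedFieldType) (n : nat).
Implicit Types X Y Z : 'M[C]_n.

Lemma two_neq0 : (2%:R : C) != 0.
Proof. by rewrite pnatr_eq0. Qed.

Lemma cayley_mulmx_add1 Z : 1%:M + Z \in unitmx -> cayley Z *m (1%:M + Z) = 1%:M - Z.
Proof. by move=> uZ; rewrite /cayley mulmxKV. Qed.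

Lemma mulmx_add1_cayley Z : 1%:M + Z \in unitmx -> (1%:M + Z) *m cayley Z = 1%:M - Z.
Proof.
move=> uZ; have comm : (1%:M + Z) *m (1%:M - Z) = (1%:M - Z) *m (1%:M + Z).
  rewrite mulmxBr mulmxDr !mulmxDl !mul1mx !mulmx1 mulNmx.
  by rewrite opprD addrA addrK addrA subrK.
by rewrite /cayley mulmxA comm mulmxK.
Qed.

Lemma add1_cayley Z : 1%:M + Z \in unitmx ->
  1%:M + cayley Z = 2%:R *: invmx (1%:M + Z).
Proof.
move=> uZ; rewrite /cayley -{1}(mulmxV uZ) -mulmxDl addrACA subrr addr0.
by rewrite -mulr2n -scaler_nat -scalemxAl mul1mx.
Qed.

Lemma unitmx_add1_cayley Z : 1%:M + Z \in unitmx -> 1%:M + cayley Z \in unitmx.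
Proof. by move=> uZ; rewrite add1_cayley // unitmxZ ?unitmx_inv // unitfE two_neq0. Qed.

Lemma cayleyE Z : 1%:M + Z \in unitmx -> cayley Z = 2%:R *: invmx (1%:M + Z) - 1%:M.
Proof. by move=> uZ; rewrite -add1_cayley // addrAC subrr add0r. Qed.

Lemma cayleyK Z : 1%:M + Z \in unitmx -> cayley (cayley Z) = Z.
Proof.
move=> uZ; have uZ' := unitmx_add1_cayley uZ.
rewrite cayleyE // add1_cayley // invmxZ -?add1_cayley // invmxK.
by rewrite scalerA mulfV ?two_neq0 // scale1r addrAC subrr add0r.
Qed.

Lemma mul_cayley X Y : 1%:M + X \in unitmx -> 1%:M + Y \in unitmx ->
  1%:M + X *m Y \in unitmx -> cayley X *m cayley Y = cayley (tsharp X Y).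
Proof.
move=> uX uY uXY; apply: (addrI 1%:M).
rewrite add1_cayley ?unitmx_add1_tsharp // invmx_add1_tsharp //.
rewrite scalemxAl scalemxAr; apply: (canRL (mulmxK uY)); apply: (canRL (mulKmx uX)).
rewrite (mulmxDl 1%:M (cayley X *m _)) mul1mx -mulmxA cayley_mulmx_add1 //.
rewrite (mulmxDr (1%:M + X)) mulmxA mulmx_add1_cayley // mulmx_add1 mulmx_sub1.
by rewrite addrACA subrr addr0 scaler_nat mulr2n.
Qed.

End Cayley.

Section Theta.
Variables (C : numClosedFieldType) (d : nat).
Local Notation th := (theta C d).
Local Notation th2 := (block_mx th 0 0 th).
Implicit Types A B Z : 'M[C]_(d + d).

Lemma theta_sqr : th *m th = 1%:M.
Proof.
rewrite /theta !scalemx1 mulmx_block !mulmx0 !mul0mx !addr0 !add0r -!scalar_mxM.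
by rewrite mulNr mulrN mulCii opprK -scalar_mx_block.
Qed.

Lemma unitmx_theta : th \in unitmx.
Proof. by have [] := mulmx1_unit theta_sqr. Qed.

Lemma trmx_theta : th^T = - th.
Proof.
rewrite /theta tr_block_mx !trmx0 !linearZ /= trmx1 opp_block_mx oppr0.
by rewrite scaleNr opprK.
Qed.

Lemma trmx_conj_theta Z : (th *m Z *m th)^T = th *m Z^T *m th.
Proof. by rewrite !trmx_mul trmx_theta !mulmxN mulNmx opprK mulmxA. Qed.

Lemma unitmx_trmx_conj_theta Z : ((th *m Z *m th)^T \in unitmx) = (Z \in unitmx).
Proof. by rewrite unitmx_tr !unitmx_mul unitmx_theta andbT. Qed.

Lemma trmx_mul_theta A : A^T = A -> (A *m th)^T = - (th *m A).
Proof. by move=> sA; rewrite trmx_mul sA trmx_theta mulNmx. Qed.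

Lemma sub1_mul_thetaE A : A^T = A ->
  1%:M - A *m th = (th *m (1%:M + A *m th) *m th)^T.
Proof.
move=> sA; rewrite trmx_conj_theta raddfD /= trmx1 trmx_mul_theta //.
by rewrite mulmxDr mulmx1 mulmxDl theta_sqr mulmxN mulNmx !mulmxA theta_sqr mul1mx.
Qed.

Lemma add1_mulC_thetaE A B : A^T = A -> B^T = B ->
  1%:M + B *m th *m (A *m th) = (th *m (1%:M + A *m th *m (B *m th)) *m th)^T.
Proof.
move=> sA sB; rewrite trmx_conj_theta raddfD /= trmx1 trmx_mul !trmx_mul_theta //.
rewrite mulmxN mulNmx opprK mulmxDr mulmx1 mulmxDl theta_sqr !mulmxA.
by rewrite theta_sqr mul1mx.
Qed.

Lemma th2_sqr : th2 *m th2 = 1%:M.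
Proof.
by rewrite mulmx_block !mulmx0 !mul0mx !addr0 !add0r theta_sqr -scalar_mx_block.
Qed.

Lemma sharpM_factor A B :
  sharpM A B = th2 *m block_mx (A *m th) (- 1%:M) 1%:M (B *m th).
Proof.
by rewrite /sharpM mulmx_block !mul0mx !addr0 !add0r mulmxN mulmx1 !mulmxA.
Qed.

Lemma unitmx_sharpM A B :
  1%:M + A *m th *m (B *m th) \in unitmx -> sharpM A B \in unitmx.
Proof.
have [uth2 _] := mulmx1_unit th2_sqr.
by move=> uXY; rewrite sharpM_factor unitmx_mul uth2 unitmx_block.
Qed.

Lemma sharpE A B : 1%:M + A *m th *m (B *m th) \in unitmx ->
  sharp A B = tsharp (A *m th) (B *m th) *m th.
Proof.
move=> uXY; have [uth2 _] := mulmx1_unit th2_sqr.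
have th2_Jmx : th2 *m Jmx C d = Jmx C d *m th.
  rewrite /Jmx mul_block_col [RHS]mul_col_mx !mul0mx addr0 add0r.
  by rewrite mulmxN mulNmx !mulmx1 !mul1mx.
rewrite /sharp sharpM_factor invmxM ?unitmx_block // (invmx_uniq th2_sqr).
rewrite -mulmxA -(mulmxA _ th2) th2_Jmx invmx_block // tsharp_blockE //.
by rewrite /Jmx tr_col_mx raddfN /= trmx1 !mulmxA.
Qed.

Lemma sharpM_sym A B : A^T = A -> B^T = B -> (sharpM A B)^T = sharpM A B.
Proof.
move=> sA sB; rewrite /sharpM tr_block_mx !trmx_mul sA sB raddfN /= !trmx_theta.
by rewrite !mulNmx !mulmxN !opprK !mulmxA.
Qed.

Lemma sharp_sym A B : A^T = A -> B^T = B -> (sharp A B)^T = sharp A B.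
Proof.
by move=> sA sB; rewrite /sharp !trmx_mul trmxK trmx_inv sharpM_sym // mulmxA.
Qed.

End Theta.

Theorem mainTheorem3 (C : numClosedFieldType) (d : nat) (hd : (0 < d)%N)
  (A B : 'M[C]_(d + d)) (hA : is_symqnd A) (hB : is_symqnd B)
  (hAB : 1%:M + A *m theta C d *m B *m theta C d \in unitmx) :
  let th := theta C d in
  let At := A *m th in
  let Bt := B *m th in
  let S := sharp A B in
  [/\ [/\ sharpM A B \in unitmx,
          [/\ 1%:M + At \in unitmx, 1%:M + Bt \in unitmx &
               1%:M + Bt *m At \in unitmx],
          1%:M - At \in unitmx, 1%:M - Bt \in unitmx &
          1%:M + cayley At *m cayley Bt \in unitmx],
      [/\ S = cayley (cayley At *m cayley Bt) *m th,
          S = invmx (1%:M + At) *m (At + Bt) *m invmx (1%:M + At *m Bt)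
                *m (1%:M + At) *m th,
          S = (1%:M + Bt) *m invmx (1%:M + At *m Bt) *m (At + Bt)
                *m invmx (1%:M + Bt) *m th,
          S = (1%:M - At) *m invmx (1%:M + Bt *m At) *m (At + Bt)
                *m invmx (1%:M - At) *m th &
          S = invmx (1%:M - Bt) *m (At + Bt) *m invmx (1%:M + Bt *m At)
                *m (1%:M - Bt) *m th],
      cayley (S *m th) = cayley At *m cayley Bt,
      1%:M + At *m Bt = (1%:M + At) *m invmx (1%:M + S *m th) *m (1%:M + Bt) &
      is_symqnd S].
Proof.
move=> th At Bt S; case: hA => sA dA; case: hB => sB dB.
have uX : 1%:M + At \in unitmx by rewrite unitmxE unitfE.
have uY : 1%:M + Bt \in unitmx by rewrite unitmxE unitfE.
have uXY : 1%:M + At *m Bt \in unitmx by rewrite mulmxA.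
have uXm : 1%:M - At \in unitmx by rewrite sub1_mul_thetaE // unitmx_trmx_conj_theta.
have uYm : 1%:M - Bt \in unitmx by rewrite sub1_mul_thetaE // unitmx_trmx_conj_theta.
have uYX : 1%:M + Bt *m At \in unitmx.
  by rewrite add1_mulC_thetaE // unitmx_trmx_conj_theta.
have uS : 1%:M + tsharp At Bt \in unitmx by exact: unitmx_add1_tsharp.
have SE : S = tsharp At Bt *m th by exact: sharpE.
have Sth : S *m th = tsharp At Bt by rewrite SE -mulmxA theta_sqr mulmx1.
split; first split=> //.
- exact: unitmx_sharpM.
- by rewrite mul_cayley // unitmx_add1_cayley.
- rewrite SE mul_cayley // cayleyK //; split; congr (_ *m _).
  + exact: tsharp_conj_add1X.
  + exact: tsharp_conj_add1Y.
  + exact: tsharp_conj_sub1X.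
  + exact: tsharp_conj_sub1Y.
- by rewrite Sth mul_cayley.
- by rewrite Sth add1_mulmx_tsharp.
- by split; [exact: sharp_sym | rewrite -unitfE -unitmxE Sth].
Qed.
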